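(* Let $G\le\mathrm{O}(d)$ be finite, $z_1,\ldots,z_n\in\mathbb{R}^d$, $x\in\bigcap_{i=1}^nQ_{z_i}$, and $y\in\mathbb{R}^d$. Then: (a) for every $i\in\{1,\ldots,n\}$, the set $\arg\max_{p\in[z_i]}\langle p,x\rangle$ consists of a single element, denoted $v_i(x)$; (b) the set $\mathcal{F}(x,y)$ of functions $f:\{1,\ldots,n\}\to[y]$ satisfying $f(i)\in S(x,y)\cap\arg\max_{q\in[y]}\langle q,v_i(x)\rangle$ for all $i$ is nonempty.
   Context: For $x\in\mathbb{R}^d$, $[x]:=\{gx:g\in G\}$. The open Voronoi cell $V_x$ is the set of $y\in\mathbb{R}^d$ such that $x$ is the unique maximizer of $\langle p,y\rangle$ over $p\in[x]$; $Q_x:=\bigcup_{p\in[x]}V_p$. For $x,y\in\mathbb{R}^d$, $S(x,y):=\{q\in[y]:V_q\cap V_x\ne\varnothing\}$. *)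

From HB Require Import structures.
From mathcomp Require Import all_boot all_order all_algebra.
From mathcomp Require Import reals.
Set Implicit Arguments. Unset Strict Implicit. Unset Printing Implicit Defensive.
Import Order.TTheory GRing.Theory Num.Theory.
Local Open Scope ring_scope.

Section Defs.
Variables (R : realType) (d : nat).

Definition inner (u v : 'cV[R]_d) : R := \sum_(k < d) u k 0 * v k 0.

Definition is_finite_subgroup_O (G : seq 'M[R]_d) : Prop :=
  [/\ (1%:M \in G),
      (forall g h, g \in G -> h \in G -> g *m h \in G),
      (forall g, g \in G -> invmx g \in G) &
      (forall g, g \in G -> g *m g^T = 1%:M)].

Definition gorbit (G : seq 'M[R]_d) (x : 'cV[R]_d) : 'cV[R]_d -> Prop :=
  fun p => exists2 g, g \in G & p = g *m x.

Definition argmax (A : 'cV[R]_d -> Prop) (f : 'cV[R]_d -> R) : 'cV[R]_d -> Prop :=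
  fun p => A p /\ (forall q, A q -> f q <= f p).

(* open Voronoi cell V_x: x is the unique maximizer of <p,y> over p in [x] *)
Definition voronoi (G : seq 'M[R]_d) (x : 'cV[R]_d) : 'cV[R]_d -> Prop :=
  fun y => argmax (gorbit G x) (fun p => inner p y) x /\
           (forall p, argmax (gorbit G x) (fun p => inner p y) p -> p = x).

Definition Qset (G : seq 'M[R]_d) (x : 'cV[R]_d) : 'cV[R]_d -> Prop :=
  fun y => exists p, gorbit G x p /\ voronoi G p y.

Definition Sset (G : seq 'M[R]_d) (x y : 'cV[R]_d) : 'cV[R]_d -> Prop :=
  fun q => gorbit G y q /\ exists w, voronoi G q w /\ voronoi G x w.

End Defs.

(* Part (a) is the definition of [Q_z]: [x] lies in the Voronoi cell of some [p] in [[z_i]],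
   i.e. [p] is the unique maximizer of [<., x>] on [[z_i]].
   For (b), since [v = v_i(x)] maximizes [<., x>] on [[z_i]] and [G] is orthogonal, [x]
   maximizes [<., v>] on [[x]].  Take [q0] in [[y]] maximizing [<., v>] and, among those
   maximizers, [<., x>].  Then [w = v + e x + e^2 q0] lies in [V_x] and in [V_q0] for small
   [e > 0]: for [q <> x] in [[x]] (resp. [q <> q0] in [[y]]) the coefficients of
   [<x - q, w>] (resp. [<q0 - q, w>]) in [1, e, e^2] are lexicographically positive,
   because distinct points [p, q] of one orbit satisfy [<p - q, p> > 0]. *)

From HB Require Import structures.
From mathcomp Require Import all_boot all_order all_algebra.
From mathcomp Require Import reals.
From mathcomp Require Import lra.
Set Implicit Arguments. Unset Strict Implicit. Unset Printing Implicit Defensive.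
Import Order.TTheory GRing.Theory Num.Theory.
Local Open Scope ring_scope.

Section Inner.
Variables (R : realType) (d : nat).
Implicit Types (u v w : 'cV[R]_d) (A : 'M[R]_d).

Lemma innerC u v : inner u v = inner v u.
Proof. by apply: eq_bigr => k _; rewrite mulrC. Qed.

Lemma innerDr u v w : inner u (v + w) = inner u v + inner u w.
Proof. by rewrite /inner -big_split; apply: eq_bigr => k _; rewrite !mxE mulrDr. Qed.

Lemma innerZr u a v : inner u (a *: v) = a * inner u v.
Proof. by rewrite /inner mulr_sumr; apply: eq_bigr => k _; rewrite !mxE mulrCA. Qed.

Lemma innerBl u v w : inner (u - v) w = inner u w - inner v w.
Proof. by rewrite /inner -sumrB; apply: eq_bigr => k _; rewrite !mxE mulrBl. Qed.

Lemma innerBr u v w : inner u (v - w) = inner u v - inner u w.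
Proof. by rewrite innerC innerBl !(innerC u). Qed.

Lemma inner_mulmxl A u v : inner (A *m u) v = inner u (A^T *m v).
Proof.
have innerE w w' : inner w w' = (w^T *m w') 0 0.
  by rewrite mxE; apply: eq_bigr => k _; rewrite mxE.
by rewrite !innerE trmx_mul mulmxA.
Qed.

Lemma inner_gt0 u : u != 0 -> 0 < inner u u.
Proof.
move=> u_neq0; have [k uk_neq0] : exists k, u k 0 != 0.
  apply/existsP; rewrite -negb_forall; apply: contra u_neq0 => /forallP u0.
  by apply/eqP/matrixP => i j; rewrite ord1 mxE; apply/eqP.
rewrite /inner (bigD1 k) //= ltr_pwDl ?sumr_ge0 // => [|i _].
  by rewrite -expr2 exprn_even_gt0.
by rewrite -expr2 sqr_ge0.
Qed.

(* For [|u| = |v|], [<u - v, u> = |u - v|^2 / 2]. *)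
Lemma inner_subl_gt0 u v : inner u u = inner v v -> u != v -> 0 < inner (u - v) u.
Proof.
move=> uv_eq uv_neq; have := inner_gt0 (_ : u - v != 0).
by rewrite subr_eq0 => /(_ uv_neq); rewrite !innerBl !innerBr (innerC v u) uv_eq; lra.
Qed.

End Inner.

Section SmallPositive.
Variable R : realType.
Implicit Types (a b c : R) (P Q : R -> Prop).

Definition small_pos P := exists2 e0 : R, 0 < e0 & forall e, 0 < e -> e <= e0 -> P e.

Lemma small_pos_mono P Q : (forall e, P e -> Q e) -> small_pos P -> small_pos Q.
Proof. by move=> PQ [e0 e0_gt0 HP]; exists e0 => // e e_gt0 le_e; apply/PQ/HP. Qed.

Lemma small_pos_and P Q : small_pos P -> small_pos Q -> small_pos (fun e => P e /\ Q e).
Proof.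
move=> [e1 e1_gt0 HP] [e2 e2_gt0 HQ]; exists (Num.min e1 e2); first by rewrite lt_min e1_gt0.
by move=> e e_gt0; rewrite le_min => /andP[le1 le2]; split; [apply: HP | apply: HQ].
Qed.

Lemma small_pos_all (T : eqType) (s : seq T) (P : T -> R -> Prop) :
  (forall t, t \in s -> small_pos (P t)) ->
  small_pos (fun e => forall t, t \in s -> P t e).
Proof.
elim: s => [|t s IHs] Hs; first by exists 1.
have [|e0 e0_gt0 He0] := small_pos_and (Hs t (mem_head t s)) (IHs _).
  by move=> t' t's; apply: Hs; rewrite in_cons t's orbT.
exists e0 => // e e_gt0 le_e t'; have [Pt Ps] := He0 e e_gt0 le_e.
by rewrite in_cons => /predU1P[->|/Ps].
Qed.

Lemma small_pos_addr a b : 0 < a -> small_pos (fun e => 0 < a + e * b).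
Proof.
move=> a_gt0; have nb_gt0 : 0 < `|b| + 1 by rewrite ltr_wpDl.
exists (a / (`|b| + 1)) => [|e e_gt0]; first by rewrite divr_gt0.
rewrite ler_pdivlMr // => le_e.
have : - (e * `|b|) <= e * b by rewrite -mulrN ler_pM2l // lerNl -normrN ler_norm.
nra.
Qed.

Lemma small_pos_quadratic a b c :
  0 <= a -> (a = 0 -> 0 <= b) -> (a = 0 -> b = 0 -> 0 < c) ->
  small_pos (fun e => 0 < a + e * b + e ^+ 2 * c).
Proof.
move=> a_ge0 b_ge0 c_gt0; have [a0|a_neq0] := eqVneq a 0.
  have [b0|b_neq0] := eqVneq b 0.
    by exists 1 => // e e_gt0 _; rewrite a0 b0 mulr0 !add0r mulr_gt0 ?exprn_gt0 ?c_gt0.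
  have b_gt0 : 0 < b by rewrite lt_def b_neq0 b_ge0.
  have [e0 e0_gt0 He0] := small_pos_addr c b_gt0.
  by exists e0 => // e e_gt0 le_e; rewrite a0 add0r expr2 -mulrA -mulrDr mulr_gt0 ?He0.
have a_gt0 : 0 < a by rewrite lt_def a_neq0 a_ge0.
have [e0 e0_gt0 He0] := small_pos_addr (- `|b| - `|c|) a_gt0.
exists (Num.min 1 e0) => [|e e_gt0]; first by rewrite lt_min ltr01.
rewrite le_min => /andP[le_e1 le_e0]; have := He0 e e_gt0 le_e0.
have lb : e * - `|b| <= e * b by rewrite ler_pM2l // lerNl -normrN ler_norm.
have lc : e ^+ 2 * - `|c| <= e ^+ 2 * c by rewrite ler_pM2l ?exprn_gt0 // lerNl -normrN ler_norm.
have le_e2 : e ^+ 2 * `|c| <= e * `|c| by rewrite ler_wpM2r // expr2 ger_pMl.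
lra.
Qed.

End SmallPositive.

Section SeqArgmax.
Variables (R : realType) (T : eqType).
Implicit Types (s : seq T) (f g : T -> R).

Lemma seq_argmax s f t0 : t0 \in s -> exists2 m, m \in s & forall q, q \in s -> f q <= f m.
Proof.
elim: s t0 => [|t s IHs] t0 // _.
have [->|[t1 /IHs[m ms Hm]]] : s = [::] \/ exists t1, t1 \in s.
- by case: s {IHs} => [|t1 s]; [left | right; exists t1; rewrite mem_head].
- by exists t; rewrite ?mem_head // => q; rewrite mem_seq1 => /eqP->.
have [le_tm|lt_mt] := leP (f t) (f m).
  by exists m => [|q]; rewrite in_cons ?ms ?orbT // => /predU1P[->|/Hm].
exists t => [|q]; first exact: mem_head.
by rewrite in_cons => /predU1P[->//|/Hm le_qm]; rewrite (le_trans le_qm) ?ltW.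
Qed.

Lemma seq_lexmax s f g t0 : t0 \in s ->
  exists2 m, m \in s & forall q, q \in s -> f q <= f m /\ (f q = f m -> g q <= g m).
Proof.
move=> /(seq_argmax f) [m1 m1s Hm1].
have [|m] := seq_argmax g (_ : m1 \in [seq q <- s | f q == f m1]).
  by rewrite mem_filter eqxx.
rewrite mem_filter => /andP[/eqP fm ms] Hm; exists m => // q qs; rewrite fm.
by split=> [|fq]; [apply: Hm1 | apply: Hm; rewrite mem_filter fq eqxx].
Qed.

End SeqArgmax.

Section Orbit.
Variables (R : realType) (d : nat) (G : seq 'M[R]_d).
Hypothesis HG : is_finite_subgroup_O G.
Implicit Types (g : 'M[R]_d) (p q u v w x y z : 'cV[R]_d).

Lemma orth_mulTmx g : g \in G -> g^T *m g = 1%:M.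
Proof. by case: HG => _ _ _ orthG /orthG/mulmx1C. Qed.

Lemma orth_trmx_mem g : g \in G -> g^T \in G.
Proof.
move=> gG; case: HG => _ _ invG orthG; have [g_unit _] := mulmx1_unit (orthG g gG).
by rewrite -[g^T]mul1mx -(mulVmx g_unit) -mulmxA orthG // mulmx1 invG.
Qed.

Lemma inner_orth g u v : g \in G -> inner (g *m u) (g *m v) = inner u v.
Proof. by move=> gG; rewrite inner_mulmxl mulmxA orth_mulTmx // mul1mx. Qed.

Lemma gorbit_refl z : gorbit G z z.
Proof. by case: HG => oneG _ _ _; exists 1%:M; rewrite ?mul1mx. Qed.

Lemma gorbit_norm z p : gorbit G z p -> inner p p = inner z z.
Proof. by case=> g gG ->; rewrite inner_orth. Qed.

Lemma gorbit_eq z p : gorbit G z p -> forall q, gorbit G p q <-> gorbit G z q.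
Proof.
case: HG => _ mulG _ _ [g gG ->] q; split=> [[h hG ->] | [h hG ->]].
  by exists (h *m g); rewrite ?mulmxA ?mulG.
exists (h *m g^T); first by rewrite mulG ?orth_trmx_mem.
by rewrite mulmxA -(mulmxA h) orth_mulTmx // mulmx1.
Qed.

Lemma gorbit_seqP z q : gorbit G z q <-> q \in [seq g *m z | g <- G].
Proof. by split=> [[g gG ->] | /mapP[g gG ->]]; [apply: map_f | exists g]. Qed.

Lemma voronoi_strict p w :
  (forall q, gorbit G p q -> q != p -> 0 < inner (p - q) w) -> voronoi G p w.
Proof.
move=> Hp; have le_p q : gorbit G p q -> inner q w <= inner p w.
  move=> pq; have [->//|qp] := eqVneq q p.
  by have := Hp q pq qp; rewrite innerBl subr_gt0 => /ltW.
split=> [|q [pq max_q]]; first by split; [apply: gorbit_refl | apply: le_p].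
apply/eqP; apply: contraT => qp; have := Hp q pq qp.
by rewrite innerBl subr_gt0 ltNge max_q //; apply: gorbit_refl.
Qed.

Lemma voronoi_argmax z p x q : gorbit G z p -> voronoi G p x ->
  argmax (gorbit G z) (fun p => inner p x) q <-> q = p.
Proof.
move=> zp [[_ max_p] uniq_p]; have Ez := gorbit_eq zp.
split=> [[zq max_q] | ->]; last by split=> // r /Ez; apply: max_p.
by apply: uniq_p; split=> [|r /Ez]; [apply/Ez | apply: max_q].
Qed.

(* [<h x, v> = <x, h^T v>] and [h^T v] ranges over the orbit of [v]. *)
Lemma argmax_dual z x v : argmax (gorbit G z) (fun p => inner p x) v ->
  argmax (gorbit G x) (fun p => inner p v) x.
Proof.
move=> [[g gG ->] max_v]; split=> [|_ [h hG ->]]; first exact: gorbit_refl.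
rewrite inner_mulmxl innerC (innerC x) mulmxA; apply: max_v.
by case: HG => _ mulG _ _; exists (h^T *m g); rewrite ?mulG ?orth_trmx_mem.
Qed.

Lemma small_pos_voronoi (p : 'cV[R]_d) (w : R -> 'cV[R]_d) :
  (forall q, gorbit G p q -> q != p -> small_pos (fun e => 0 < inner (p - q) (w e))) ->
  small_pos (fun e => voronoi G p (w e)).
Proof.
move=> Hp; pose P q e := q != p -> 0 < inner (p - q) (w e).
apply: small_pos_mono (small_pos_all (s := [seq g *m p | g <- G]) (P := P) _).
  by move=> e He; apply: voronoi_strict => q /gorbit_seqP /He.
move=> q /gorbit_seqP pq; have [->|qp] := eqVneq q p.
  by exists 1 => // e _ _; rewrite /P eqxx.
by apply: small_pos_mono (Hp q pq qp) => e He _.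
Qed.

Lemma exists_Sset_argmax x y v : argmax (gorbit G x) (fun p => inner p v) x ->
  exists q, Sset G x y q /\ argmax (gorbit G y) (fun q => inner q v) q.
Proof.
move=> [_ max_x].
have [q0 /gorbit_seqP yq0 max_q0] := seq_lexmax (fun q => inner q v) (fun q => inner q x)
  ((gorbit_seqP y y).1 (gorbit_refl y)).
pose w e := v + e *: x + e ^+ 2 *: q0.
have small_pos_w p q : small_pos (fun e =>
      0 < inner (p - q) v + e * inner (p - q) x + e ^+ 2 * inner (p - q) q0) ->
    small_pos (fun e => 0 < inner (p - q) (w e)).
  by apply: small_pos_mono => e; rewrite !innerDr !innerZr.
have [||e e_gt0 He] :=
  small_pos_and (small_pos_voronoi (p := x) (w := w) _) (small_pos_voronoi (p := q0) (w := w) _).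
- move=> q xq qx; apply: small_pos_w.
  have lt_x := inner_subl_gt0 (esym (gorbit_norm xq)) (contra_neq esym qx).
  apply: small_pos_quadratic => [|_|_]; last lra; last exact: ltW.
  by rewrite innerBl subr_ge0; apply: max_x.
- move=> q /(gorbit_eq yq0) yq qq0; apply: small_pos_w.
  have [le_v le_x] := max_q0 q ((gorbit_seqP y q).1 yq).
  have lt_q0 := inner_subl_gt0 (etrans (gorbit_norm yq0) (esym (gorbit_norm yq)))
    (contra_neq esym qq0).
  apply: small_pos_quadratic => [|v0|//]; rewrite innerBl subr_ge0 //.
  by apply: le_x; move: v0; rewrite innerBl; lra.
have [Vx Vq0] := He e e_gt0 (lexx e).
exists q0; split; first by split=> //; exists (w e).
by split=> // q /gorbit_seqP /max_q0 [].
Qed.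

End Orbit.

Theorem corollary19 (R : realType) (d : nat) (G : seq 'M[R]_d)
    (n : nat) (z : 'I_n -> 'cV[R]_d) (x y : 'cV[R]_d) :
  is_finite_subgroup_O G ->
  (forall i, Qset G (z i) x) ->
  (* (a) argmax_{p in [z_i]} <p,x> is a singleton {v_i(x)} *)
  (forall i, exists v, forall p,
      argmax (gorbit G (z i)) (fun p => inner p x) p <-> p = v) /\
  (* (b) with v i = v_i(x), the set F(x,y) is nonempty *)
  (forall v : 'I_n -> 'cV[R]_d,
      (forall i, argmax (gorbit G (z i)) (fun p => inner p x) (v i)) ->
      exists f : 'I_n -> 'cV[R]_d, forall i,
        gorbit G y (f i) /\ Sset G x y (f i) /\
        argmax (gorbit G y) (fun q => inner q (v i)) (f i)).
Proof.
move=> HG HQ; split=> [i | v Hv].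
  by have [p [zp Vp]] := HQ i; exists p => q; apply: voronoi_argmax.
have /fin_all_exists[f Hf] : forall i, exists q,
    Sset G x y q /\ argmax (gorbit G y) (fun q => inner q (v i)) q.
  by move=> i; apply/exists_Sset_argmax/argmax_dual/Hv.
by exists f => i; have [[yf _] _] := Hf i; split.
Qed.
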